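(* If $n\ge 3$ is odd, the free group $F_n$ has no $\Delta$-primitive elements.
   Context: $F_n$ is free with basis $x_1,\dots,x_n$; $\mathbb{Z}F_n$ is its integral group ring with augmentation ideal $\Delta$ (kernel of $\varepsilon:\mathbb{Z}F_n\to\mathbb{Z}$). For $g\in F_n$, the Fox derivatives $d_i(g)\in\mathbb{Z}F_n$ are the unique elements with $g-1=\sum_{i=1}^n d_i(g)(x_i-1)$. An element $u\in F_n$ is $\Delta$-primitive if $d_1(u),\dots,d_n(u)$ generate $\Delta$ as a right ideal of $\mathbb{Z}F_n$. *)

From HB Require Import structures.
From mathcomp Require Import all_boot all_order all_algebra.
Set Implicit Arguments. Unset Strict Implicit. Unset Printing Implicit Defensive.
Import GRing.Theory Num.Theory.
Local Open Scope ring_scope.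

(* A letter of F_n: (i, false) is x_i, (i, true) is x_i^{-1}. *)
Definition letter (n : nat) := ('I_n * bool)%type.
Definition word (n : nat) := seq (letter n).

(* Free reduction (right-to-left stack); the elements of F_n are the
   reduced words, and reduce w is the element represented by w. *)
Definition cancels n (l h : letter n) : bool := (l.1 == h.1) && (l.2 != h.2).
Definition reduce n (w : word n) : word n :=
  foldr (fun l acc => match acc with
                      | h :: t => if cancels l h then t else l :: acc
                      | [::] => [:: l] end) [::] w.

(* Elements of Z F_n are represented by formal sums sum_k c_k w_k. *)
Definition ZF (n : nat) := seq (int * word n).
Definition coef n (a : ZF n) (g : word n) : int :=
  \sum_(p <- a | reduce p.2 == g) p.1.
Definition eqZF n (a b : ZF n) : Prop := forall g : word n, coef a g = coef b g.
Definition addZF n (a b : ZF n) : ZF n := a ++ b.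
Definition mulZF n (a b : ZF n) : ZF n :=
  [seq (p.1 * q.1, p.2 ++ q.2) | p <- a, q <- b].
Definition sumZF n (f : 'I_n -> ZF n) : ZF n := flatten [seq f i | i <- enum 'I_n].
Definition augm n (a : ZF n) : int := \sum_(p <- a) p.1.
Definition inDelta n (a : ZF n) : Prop := augm a = 0.

(* Fox derivative d_i via the standard formula
   d_i(w) = sum over occurrences: +prefix before x_i, -prefix up to and
   including x_i^{-1}. *)
Fixpoint fox_aux n (i : 'I_n) (pre : word n) (w : word n) : ZF n :=
  match w with
  | [::] => [::]
  | l :: t =>
      (if l.1 == i then (if l.2 then [:: (-1, rcons pre l)] else [:: (1, pre)])
       else [::]) ++ fox_aux i (rcons pre l) t
  end.
Definition fox n (i : 'I_n) (w : word n) : ZF n := fox_aux i [::] w.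

(* u is Delta-primitive: the right ideal generated by d_1(u),...,d_n(u)
   equals Delta. *)
Definition delta_primitive n (u : word n) : Prop :=
  forall a : ZF n,
    inDelta a <-> exists r : 'I_n -> ZF n, eqZF a (sumZF (fun i => mulZF (fox i u) (r i))).

(** Abelianize. For [k] let [L_k] be the additive extension to Z F_n of the
    exponent sum of [x_k]; with [e] the augmentation it satisfies
    [L_k(ab) = L_k(a) e(b) + e(a) L_k(b)], and [e(d_i w)] is the exponent sum
    [e_i] of [x_i] in [w]. If [u] is Delta-primitive, all exponent sums of [u]
    vanish (each [d_i u] lies in Delta), and writing [x_j - 1 = sum_i d_i(u) r_ij]
    and applying [L_k] gives [V R = 1] for the integer matrices
    [V = (L_k(d_i u))] and [R = (e(r_ij))]. But the identity
    [L_k(d_i w) + L_i(d_k w) = e_k e_i - [k = i] e_i] makes [V]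
    skew-symmetric, so [det V = 0] when [n] is odd. *)
From mathcomp Require Import all_boot all_order all_algebra.
From mathcomp Require Import ring.
Set Implicit Arguments. Unset Strict Implicit. Unset Printing Implicit Defensive.
Import GRing.Theory.
Local Open Scope ring_scope.

Lemma det_skew_odd (R : idomainType) (m : nat) (A : 'M[R]_m) :
  2%:R != 0 :> R -> odd m -> A^T = - A -> \det A = 0.
Proof.
move=> two_neq0 odd_m skewA.
have detN : \det A = - \det A.
  by rewrite -[LHS]det_tr skewA -scaleN1r detZ -signr_odd odd_m expr1 mulN1r.
have : \det A * 2%:R = 0 by rewrite mulr_natr mulr2n {1}detN addNr.
by move/eqP; rewrite mulf_eq0 (negbTE two_neq0) orbF => /eqP.
Qed.

Section Abelianization.
Variable n : nat.
Implicit Types (k i : 'I_n) (l : letter n) (w : word n) (a b : ZF n).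

Definition letter_exp k l : int :=
  if l.1 == k then (if l.2 then -1 else 1) else 0.
Definition expsum k w : int := \sum_(l <- w) letter_exp k l.
Definition linZF (f : word n -> int) a : int := \sum_(p <- a) p.1 * f p.2.

Lemma expsum_nil k : expsum k [::] = 0.
Proof. by rewrite /expsum big_nil. Qed.

Lemma expsum_cons k l w : expsum k (l :: w) = letter_exp k l + expsum k w.
Proof. by rewrite /expsum big_cons. Qed.

Lemma expsum_cat k w1 w2 : expsum k (w1 ++ w2) = expsum k w1 + expsum k w2.
Proof. by rewrite /expsum big_cat. Qed.

Lemma expsum_rcons k w l : expsum k (rcons w l) = expsum k w + letter_exp k l.
Proof. by rewrite -cats1 expsum_cat expsum_cons expsum_nil addr0. Qed.

Lemma expsum_reduce k w : expsum k (reduce w) = expsum k w.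
Proof.
elim: w => [|l w IH] //; rewrite /reduce /= -/(reduce w) expsum_cons -IH.
case: (reduce w) => [|h t] /=; first by rewrite expsum_cons.
case cancel_lh: (cancels l h); last by rewrite expsum_cons.
move: cancel_lh; rewrite /cancels expsum_cons addrA /letter_exp => /andP[/eqP ->].
by case: (h.1 == k); case: l.2; case: h.2 => //= _; ring.
Qed.

Lemma linZF_nil f : linZF f [::] = 0.
Proof. by rewrite /linZF big_nil. Qed.

Lemma linZF1 f p : linZF f [:: p] = p.1 * f p.2.
Proof. by rewrite /linZF big_cons big_nil addr0. Qed.

Lemma linZF_cat f a b : linZF f (a ++ b) = linZF f a + linZF f b.
Proof. by rewrite /linZF big_cat. Qed.

Lemma linZF_sumZF f (r : 'I_n -> ZF n) :
  linZF f (sumZF r) = \sum_(i < n) linZF f (r i).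
Proof. by rewrite /linZF /sumZF big_flatten big_map big_enum. Qed.

Lemma coef_cons p a g :
  coef (p :: a) g = (if reduce p.2 == g then p.1 else 0) + coef a g.
Proof. by rewrite /coef big_cons; case: ifP => // _; rewrite add0r. Qed.

Lemma coef_sumZF (r : 'I_n -> ZF n) g : coef (sumZF r) g = \sum_(i < n) coef (r i) g.
Proof. by rewrite /coef /sumZF big_flatten big_map big_enum. Qed.

Lemma coef_mulZF1 a g : coef (mulZF a [:: (1, [::])]) g = coef a g.
Proof.
rewrite /coef /mulZF big_mkcond big_allpairs_dep [RHS]big_mkcond /=.
by apply: eq_bigr => p _; rewrite big_cons big_nil /= cats0 mulr1 addr0.
Qed.

Lemma coef_mulZF0 a g : coef (mulZF a [::]) g = 0.
Proof. by rewrite /coef big_mkcond big_allpairs_dep big1 // => p _; rewrite big_nil. Qed.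

Section ReduceInvariant.
Variable f : word n -> int.
Hypothesis f_reduce : forall w, f (reduce w) = f w.

Lemma linZF_coef a (S : seq (word n)) :
  uniq S -> {in a, forall p, reduce p.2 \in S} ->
  linZF f a = \sum_(g <- S) coef a g * f g.
Proof.
move=> uniqS; elim: a => [|p a IH] aS.
  by rewrite linZF_nil big1 // => g _; rewrite /coef big_nil mul0r.
rewrite /linZF big_cons -/(linZF f a) IH => [|q q_a]; last by rewrite aS // inE q_a orbT.
under [RHS]eq_bigr => g _ do rewrite coef_cons mulrDl.
rewrite big_split /=; congr (_ + _).
rewrite (bigD1_seq (reduce p.2)) ?aS ?mem_head //= eqxx f_reduce big1 ?addr0 //.
by move=> g /negPf; rewrite eq_sym => ->; rewrite mul0r.
Qed.

Lemma linZF_eqZF a b : eqZF a b -> linZF f a = linZF f b.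
Proof.
move=> eq_ab; set S := undup [seq reduce p.2 | p <- a ++ b].
have inS : {in a ++ b, forall p, reduce p.2 \in S}.
  by move=> p p_ab; rewrite mem_undup; apply: map_f.
rewrite !(@linZF_coef _ S) ?undup_uniq // => [|p p_b|p p_a]; last 2 first.
- by apply: inS; rewrite mem_cat p_b orbT.
- by apply: inS; rewrite mem_cat p_a.
by apply: eq_bigr => g _; rewrite eq_ab.
Qed.

End ReduceInvariant.

Lemma augm_cat a b : augm (a ++ b) = augm a + augm b.
Proof. by rewrite /augm big_cat. Qed.

Lemma linZF_mulZF (f : word n -> int) a b :
  (forall w1 w2, f (w1 ++ w2) = f w1 + f w2) ->
  linZF f (mulZF a b) = linZF f a * augm b + augm a * linZF f b.
Proof.
move=> f_cat; rewrite /linZF /augm /mulZF big_allpairs_dep !big_distrl -big_split /=.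
apply: eq_bigr => p _; rewrite !big_distrr -big_split /=.
by apply: eq_bigr => q _; rewrite f_cat; ring.
Qed.

Lemma augm_fox_aux i pre w : augm (fox_aux i pre w) = expsum i w.
Proof.
elim: w pre => [|l t IH] pre; first by rewrite /augm big_nil expsum_nil.
rewrite /= augm_cat IH expsum_cons /letter_exp.
by case: (l.1 == i); case: l.2; rewrite /augm /= ?big_cons ?big_nil ?addr0.
Qed.

Lemma linZF_fox_aux k i pre w :
  linZF (expsum k) (fox_aux i pre w) =
  expsum k pre * expsum i w + linZF (expsum k) (fox i w).
Proof.
elim: w pre => [|l t IH] pre; first by rewrite linZF_nil expsum_nil mulr0 addr0.
rewrite /fox /= !linZF_cat IH [linZF _ (fox_aux i [:: l] t)]IH.
rewrite !expsum_rcons !expsum_cons expsum_nil addr0 [letter_exp i l]/letter_exp.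
by case: (l.1 == i); case: l.2;
  rewrite ?linZF_nil ?linZF1 /= ?expsum_rcons ?expsum_cons ?expsum_nil; ring.
Qed.

Lemma fox_cons i l t : fox i (l :: t) = fox i [:: l] ++ fox_aux i [:: l] t.
Proof. by rewrite /fox /= cats0. Qed.

Lemma linZF_fox_letter k i l :
  linZF (expsum k) (fox i [:: l]) = if (l.1 == i) && l.2 then - letter_exp k l else 0.
Proof.
rewrite /fox /= cats0.
by case: (l.1 == i); case: l.2;
  rewrite ?linZF_nil ?linZF1 /= ?expsum_cons ?expsum_nil ?mulr0 ?addr0 ?mulN1r.
Qed.

Lemma fox_skew_letter k i l :
  linZF (expsum k) (fox i [:: l]) + linZF (expsum i) (fox k [:: l]) =
  letter_exp k l * letter_exp i l - (if k == i then letter_exp i l else 0).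
Proof.
case: l => j b; rewrite !linZF_fox_letter /letter_exp /=.
case: (eqVneq j i) => [<-|ji]; case: (eqVneq j k) => [?|jk]; subst=> /=;
  by rewrite ?eqxx ?if_same; case: b; ring.
Qed.

Lemma fox_skew k i w :
  linZF (expsum k) (fox i w) + linZF (expsum i) (fox k w) =
  expsum k w * expsum i w - (if k == i then expsum i w else 0).
Proof.
elim: w => [|l t IH]; first by rewrite /fox /= !linZF_nil !expsum_nil; case: (k == i).
rewrite (fox_cons i) (fox_cons k) !(linZF_cat _ (fox _ [:: l])).
rewrite (linZF_fox_aux k i) (linZF_fox_aux i k) !expsum_cons !expsum_nil !addr0.
transitivity (
  (linZF (expsum k) (fox i [:: l]) + linZF (expsum i) (fox k [:: l])) +
  (linZF (expsum k) (fox i t) + linZF (expsum i) (fox k t)) +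
  letter_exp k l * expsum i t + letter_exp i l * expsum k t); first ring.
by rewrite fox_skew_letter IH; case: (k == i); ring.
Qed.

End Abelianization.

Definition fox_matrix n (u : word n) : 'M[int]_n :=
  \matrix_(k, i) linZF (expsum k) (fox i u).

Section DeltaPrimitive.
Variables (n : nat) (u : word n).
Hypothesis u_prim : delta_primitive u.

Lemma delta_primitive_expsum i : expsum i u = 0.
Proof.
rewrite -(augm_fox_aux i [::] u); apply/(u_prim (fox i u)).
exists (fun j => if j == i then [:: (1, [::])] else [::]) => g.
rewrite coef_sumZF (bigD1 i) //= eqxx coef_mulZF1 big1 ?addr0 // => j /negPf ->.
exact: coef_mulZF0.
Qed.

Lemma delta_primitive_fox_skew : (fox_matrix u)^T = - fox_matrix u.
Proof.
apply/matrixP => k i; rewrite !mxE; apply/eqP; rewrite -subr_eq0 opprK.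
by rewrite fox_skew !delta_primitive_expsum mul0r; case: (i == k); rewrite subr0.
Qed.

Lemma delta_primitive_fox_inv : exists R : 'M[int]_n, fox_matrix u *m R = 1%:M.
Proof.
have gen j : exists r : 'I_n -> ZF n,
    eqZF [:: (1, [:: (j, false)]); (-1, [::])] (sumZF (fun i => mulZF (fox i u) (r i))).
  by apply/u_prim; rewrite /inDelta /augm !big_cons big_nil.
have [r r_gen] := fin_all_exists gen.
exists (\matrix_(i, j) augm (r j i)); apply/matrixP => k j; rewrite !mxE.
have := linZF_eqZF (@expsum_reduce n k) (r_gen j).
rewrite linZF_sumZF (linZF_cat _ [:: _] [:: _]) !linZF1 /= expsum_cons !expsum_nil.
rewrite mul1r mulr0 !addr0 /letter_exp /= eq_sym => gen_kj.
have -> : (k == j)%:R = if k == j then 1 else 0 :> int by case: (k == j).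
rewrite gen_kj; apply: eq_bigr => i _.
rewrite !mxE linZF_mulZF ?augm_fox_aux ?delta_primitive_expsum ?mul0r ?addr0 //.
exact: expsum_cat.
Qed.

End DeltaPrimitive.

(* Only the parity of [n] matters. *)
Theorem corollary1p5 (n : nat) : (3 <= n)%N -> odd n ->
  forall u : word n, ~ delta_primitive u.
Proof.
move=> _ odd_n u u_prim.
have [R inv_R] := delta_primitive_fox_inv u_prim.
have det0 : \det (fox_matrix u) = 0.
  by apply: det_skew_odd odd_n (delta_primitive_fox_skew u_prim).
by have := det_mulmx (fox_matrix u) R; rewrite inv_R det1 det0 mul0r => /eqP; rewrite oner_eq0.
Qed.
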